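(* Let $N$, $i$, $k$ be positive integers with $k\le N$ and $N/(i+1)\le k\le N/i$, and suppose $N$ is a multiple of every integer in $[2,i]$. Then $$I_N\!\left(\frac{1}{k}\right)=2+N\sum_{j=1}^{i}\frac{\varphi(j)}{j}-k\,\Phi(i),$$ where $\Phi(i)=\sum_{j=1}^{i}\varphi(j)$.
   Context: $\varphi$ is Euler's totient function and $\Phi(i)=\sum_{j=1}^{i}\varphi(j)$ is the totient summatory function (equivalently $|F_i|-1$). For a positive integer $N$, the Farey sequence of order $N$, $F_N$, is the increasing list of all reduced fractions $h/k$ with $0\le h\le k\le N$ and $\gcd(h,k)=1$; it begins with $0/1$ and ends with $1/1$. For $x\in F_N$, $I_N(x)$ denotes the position of $x$ in $F_N$, indexed starting from $1$ (so $I_N(0/1)=1$). *)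

From HB Require Import structures.
From mathcomp Require Import all_boot all_order all_algebra.
Set Implicit Arguments. Unset Strict Implicit. Unset Printing Implicit Defensive.
Import Order.TTheory GRing.Theory Num.Theory.
Local Open Scope ring_scope.

Definition farey (N : nat) : seq rat :=
  sort <=%R [seq (p.1%:R / p.2%:R : rat) |
               p <- [seq (h, k) | k <- iota 1 N, h <- iota 0 k.+1]
               & coprime p.1 p.2].

(* 1-based position of x in the Farey sequence F_N. *)
Definition farey_index (N : nat) (x : rat) : nat := (index x (farey N)).+1.

Definition Phi (i : nat) : nat := (\sum_(1 <= j < i.+1) totient j)%N.

From HB Require Import structures.
From mathcomp Require Import all_boot all_order all_algebra.
From mathcomp Require Import ring.
Import Order.TTheory GRing.Theory Num.Theory.

Set Implicit Arguments.
Unset Strict Implicit.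
Unset Printing Implicit Defensive.

(* A fraction [h/m] of [F_N] lies below [1/k] iff [h k < m].  Apart from
   [0/1], such fractions have [1 <= h <= i], since [h >= i + 1] would give
   [h k >= N >= m].  For fixed [h] the admissible denominators are the
   integers of [(h k, N]] coprime to [h]; as [h] divides [N], this interval
   consists of [N/h - k] full periods of [m |-> coprime h m], each contributing
   [phi(h)].  Hence [I_N(1/k) = 2 + sum_{h=1}^i (N/h - k) phi(h)]. *)

Lemma sum_coprime_period h x :
  \sum_(x <= m < x + h) coprime h m = totient h.
Proof.
have [->|h_gt0] := posnP h; first by rewrite addn0 big_geq.
have x_lt : forall y, y < y + h by move=> y; rewrite -[X in X < _]addn0 ltn_add2l.
elim: x => [|x IHx]; first by rewrite add0n totient_count_coprime.
have coprime_addl : coprime h (x + h) = coprime h x by rewrite /coprime gcdnDr.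
rewrite -IHx addSn big_nat_recr ?x_lt //= coprime_addl.
by rewrite [in RHS]big_ltn ?x_lt // addnC.
Qed.

Lemma sum_coprime_periods h x q :
  \sum_(x <= m < x + q * h) coprime h m = q * totient h.
Proof.
elim: q => [|q IHq]; first by rewrite addn0 big_geq.
rewrite mulSnr addnA (big_cat_nat _ (n := x + q * h)) ?leq_addr //= IHq.
by rewrite sum_coprime_period mulSnr.
Qed.

Lemma sum_coprime_gt h k N : h %| N -> h * k <= N ->
  \sum_(1 <= m < N.+1) (coprime h m && (h * k < m)) = (N %/ h - k) * totient h.
Proof.
move=> dvd_hN hk_le_N.
rewrite (big_cat_nat _ (n := (h * k).+1)) //= big_nat_cond big1 => [|m]; last first.
  by rewrite andbT => /andP[_]; rewrite ltnS leqNgt => /negbTE->; rewrite andbF.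
rewrite add0n (eq_big_nat _ _ (F2 := fun m => coprime h m : nat)) => [|m]; last first.
  by case/andP=> hk_lt_m _; rewrite hk_lt_m andbT.
have -> : N.+1 = (h * k).+1 + (N %/ h - k) * h.
  by rewrite mulnBl (divnK dvd_hN) [k * h]mulnC addSn subnKC.
exact: sum_coprime_periods.
Qed.

Lemma big_nat_widen_idx (R : Type) (idx : R) (op : Monoid.law idx) m n1 n2
    (F : nat -> R) :
  m <= n1 <= n2 -> (forall i, n1 <= i < n2 -> F i = idx) ->
  \big[op/idx]_(m <= i < n1) F i = \big[op/idx]_(m <= i < n2) F i.
Proof.
case/andP=> le_m_n1 le_n1_n2 F_idx.
by rewrite (big_cat_nat le_m_n1 le_n1_n2) /= [X in op _ X]big1_seq ?Monoid.mulm1 //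
  => i; rewrite mem_index_iota => /andP[_ /F_idx].
Qed.

Lemma sum_coprime_lt_inv N i k :
  0 < N -> 0 < k -> k * i <= N -> N <= k * i.+1 ->
  (forall h, 0 < h <= i -> h %| N) ->
  \sum_(1 <= m < N.+1) \sum_(0 <= h < m.+1) (coprime h m && (h * k < m))
  = 1 + \sum_(1 <= h < i.+1) (N %/ h - k) * totient h.
Proof.
move=> N_gt0 k_gt0 ki_le_N N_le_ki1 dvd_N.
set f := fun h m => (coprime h m && (h * k < m) : nat).
have f0 h m : m <= h * k -> f h m = 0 by rewrite /f leqNgt => /negbTE->; rewrite andbF.
have i_le_N : i <= N by apply: leq_trans _ ki_le_N; rewrite leq_pmull.
have -> : \sum_(1 <= m < N.+1) \sum_(0 <= h < m.+1) f h m =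
          \sum_(1 <= m < N.+1) \sum_(0 <= h < i.+1) f h m.
  apply: eq_big_nat => m /andP[_]; rewrite ltnS => le_m_N.
  rewrite (@big_nat_widen_idx _ _ _ 0 m.+1 N.+1) => [|//|h /andP[lt_m_h _]].
    rewrite [RHS](@big_nat_widen_idx _ _ _ 0 i.+1 N.+1) => [//|//|h /andP[lt_i_h _]].
    apply/f0/(leq_trans le_m_N)/(leq_trans N_le_ki1).
    by rewrite mulnC leq_pmul2r.
  by apply/f0/(leq_trans (ltnW lt_m_h)); rewrite leq_pmulr.
rewrite exchange_big_nat big_ltn //=; congr (_ + _).
  by rewrite big_ltn // big_nat_cond big1 // => m /andP[/andP[lt_1_m _] _];
     rewrite /f /coprime gcd0n gtn_eqF.
apply: eq_big_nat => h /andP[h_gt0 lt_h_i].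
apply: sum_coprime_gt; first exact/dvd_N/andP.
by apply: leq_trans _ ki_le_N; rewrite mulnC leq_pmul2l // -ltnS.
Qed.

Lemma index_sorted_le d (T : porderType d) (s : seq T) x :
  sorted <=%O s -> x \in s -> index x s = count (fun y => (y < x)%O) s.
Proof.
elim: s => [//|y s IHs] /= sorted_ys; rewrite in_cons.
have y_le : all (fun z => (y <= z)%O) s := order_path_min le_trans sorted_ys.
have [->|neq_xy] /= := eqVneq x y.
  move=> _; apply/esym/eqP; rewrite ltxx add0n eqn0Ngt -has_count.
  by apply/hasPn => z /(allP y_le) /le_gtF ->.
move=> s_x; rewrite IHs ?(path_sorted sorted_ys) //.
by rewrite lt_neqAle eq_sym neq_xy (allP y_le).
Qed.

Local Open Scope ring_scope.

Lemma ltr_natdiv_inv (R : numFieldType) (h m k : nat) : (0 < m)%N -> (0 < k)%N ->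
  (h%:R / m%:R < 1 / k%:R :> R) = (h * k < m)%N.
Proof.
move=> m_gt0 k_gt0.
by rewrite ltr_pdivrMr ?ltr0n // mul1r mulrC ltr_pdivlMr ?ltr0n // -natrM ltr_nat.
Qed.

Lemma count_farey (P : pred rat) N :
  count P (farey N) =
  (\sum_(1 <= m < N.+1) \sum_(0 <= h < m.+1) (coprime h m && P (h%:R / m%:R)))%N.
Proof.
rewrite count_sort count_map count_filter -sum1_count big_mkcond big_allpairs_dep.
rewrite /index_iota subSS subn0; apply: eq_bigr => m _; rewrite subn0.
by apply: eq_bigr => h _; rewrite /= andbC; case: (_ && _).
Qed.

Lemma mem_farey N h m :
  coprime h m -> (h <= m)%N -> (0 < m <= N)%N -> h%:R / m%:R \in farey N.
Proof.
move=> co_hm le_h_m /andP[m_gt0 le_m_N].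
rewrite mem_sort; apply/mapP; exists (h, m) => //.
rewrite mem_filter; apply/andP; split=> //.
apply/flatten_mapP; exists m; first by rewrite mem_iota m_gt0 add1n ltnS.
by apply: (map_f (fun h0 => (h0, m))); rewrite mem_iota add0n ltnS.
Qed.

Lemma farey_index_inv N i k :
  (0 < N)%N -> (0 < k <= N)%N -> (k * i <= N)%N -> (N <= k * i.+1)%N ->
  (forall h, (0 < h <= i)%N -> (h %| N)%N) ->
  farey_index N (1 / k%:R) = (2 + \sum_(1 <= h < i.+1) (N %/ h - k) * totient h)%N.
Proof.
move=> N_gt0 /andP[k_gt0 le_k_N] ki_le_N N_le_ki1 dvd_N.
have inv_k_farey : 1 / k%:R \in farey N by rewrite -[1]/(1%:R) mem_farey ?coprime1n ?k_gt0.
rewrite /farey_index index_sorted_le ?sort_sorted //; last exact: le_total.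
rewrite count_farey -[2%N]/(1 + 1)%N -addnA.
rewrite -(sum_coprime_lt_inv N_gt0 k_gt0 ki_le_N N_le_ki1 dvd_N) add1n.
congr (_.+1); apply: eq_big_nat => m /andP[m_gt0 _].
by apply: eq_bigr => h _; rewrite ltr_natdiv_inv.
Qed.

Theorem theorem3 (N i k : nat) :
  (0 < N)%N -> (0 < i)%N -> (0 < k)%N -> (k <= N)%N ->
  (N%:R / (i.+1)%:R : rat) <= k%:R -> (k%:R : rat) <= N%:R / i%:R ->
  (forall d : nat, (2 <= d <= i)%N -> (d %| N)%N) ->
  (farey_index N (1 / k%:R))%:R =
    2 + N%:R * (\sum_(1 <= j < i.+1) ((totient j)%:R / j%:R : rat))
      - k%:R * (Phi i)%:R.
Proof.
move=> N_gt0 i_gt0 k_gt0 le_k_N N_le_ki1 ki_le_N dvd_N.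
rewrite ler_pdivrMr ?ltr0n // -natrM ler_nat in N_le_ki1.
rewrite ler_pdivlMr ?ltr0n // -natrM ler_nat in ki_le_N.
have {}dvd_N h : (0 < h <= i)%N -> (h %| N)%N.
  by case: h => [//|[_|h h_le_i]]; [exact: dvd1n | exact: dvd_N].
rewrite (farey_index_inv N_gt0 _ ki_le_N N_le_ki1 dvd_N) ?k_gt0 //.
rewrite /Phi !natr_sum !mulr_sumr -addrA -sumrB natrD natr_sum; congr (_ + _).
apply: eq_big_nat => h /andP[h_gt0 lt_h_i].
have h_dvd_N : (h %| N)%N by apply: dvd_N; rewrite h_gt0 -ltnS.
have le_k_Nh : (k <= N %/ h)%N.
  by rewrite leq_divRL // (leq_trans _ ki_le_N) // leq_pmul2l // -ltnS.
rewrite natrM natrB // natf_div //; field.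
by rewrite pnatr_eq0 -lt0n.
Qed.
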